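(* For $n\ge1$, the characteristic polynomial of the priority lattice $\Pi(n)$ is $\chi(\Pi(n),q)=q(q-1)^n$.
   Context: $[n]_0=\{0,\dots,n\}$. A priority forest on $[n]_0$ is a rooted forest with vertex set $[n]_0$ whose component trees $T_0,T_1,\dots$ are increasing (each non-root vertex has a larger label than its parent) and satisfy: for $j<k$ every label of $T_j$ is smaller than every label of $T_k$. The priority lattice $\Pi(n)$ is the set of priority forests on $[n]_0$, ordered by inclusion of edge sets, together with an extra top element $\hat1$; $\hat0$ is the edgeless forest. Its rank function is $\rho(P)=|E(P)|$ for priority forests and $\rho(\hat1)=n+1$. The characteristic polynomial is $\chi(\Pi(n),q)=\sum_{x\in\Pi(n)}\mu(\hat0,x)\,q^{\rho(\hat1)-\rho(x)}$, with $\mu$ the Möbius function of $\Pi(n)$. *)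

From HB Require Import structures.
From mathcomp Require Import all_boot all_order all_algebra.
Set Implicit Arguments. Unset Strict Implicit. Unset Printing Implicit Defensive.
Import GRing.Theory.

(* mu(x,x) = 1,  mu(x,y) = - sum_{x <= z < y} mu(x,z) for x < y,  0 otherwise.
   Defined by recursion with fuel; fuel #|T| suffices since every chain in T
   has at most #|T| - 1 steps. *)
Fixpoint mobius_fuel (T : finType) (le : rel T) (k : nat) (x y : T) : int :=
  match k with
  | 0 => ((x == y) : nat)%:Z
  | k'.+1 =>
      if x == y then 1%R
      else if le x y then
        (- \sum_(z : T | le x z && le z y && (z != y)) mobius_fuel le k' x z)%R
      else 0%R
  end.

Definition mobius (T : finType) (le : rel T) (x y : T) : int :=
  mobius_fuel le #|T| x y.

(* A rooted forest is encoded by its parent function: f i = Some j means that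
   j is the parent of i (edge {j,i}), f i = None means i is a root. *)
Definition forest_fun (n : nat) := {ffun 'I_n.+1 -> option 'I_n.+1}.

Definition up n (f : forest_fun n) (x : 'I_n.+1) : 'I_n.+1 :=
  if f x is Some p then p else x.

(* the root of the tree containing x (for increasing forests the depth is <= n) *)
Definition root_of n (f : forest_fun n) (x : 'I_n.+1) : 'I_n.+1 :=
  iter n.+1 (up f) x.

Definition increasing n (f : forest_fun n) : bool :=
  [forall i, if f i is Some j then (j < i)%N else true].

Definition priority_cond n (f : forest_fun n) : bool :=
  [forall x, forall y, (root_of f x < root_of f y)%N ==> (x < y)%N].

Definition is_priority n (f : forest_fun n) : bool :=
  increasing f && priority_cond f.

Definition pforest (n : nat) := {f : forest_fun n | is_priority f}.

Definition edges n (f : forest_fun n) : {set 'I_n.+1 * 'I_n.+1} :=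
  [set e | f e.2 == Some e.1].

(* Some P = the priority forest P ; None = the extra top element 1^ *)
Definition PL (n : nat) := option (pforest n).

Definition PL_le n : rel (PL n) := fun x y =>
  match x, y with
  | _, None => true
  | None, Some _ => false
  | Some P, Some Q => edges (val P) \subset edges (val Q)
  end.

Definition edgeless n : forest_fun n := [ffun => None].

Lemma edgeless_priority n : is_priority (edgeless n).
Proof.
apply/andP; split; first by apply/forallP => i; rewrite ffunE.
apply/forallP => x; apply/forallP => y; apply/implyP.
have rootE z : root_of (edgeless n) z = z.
  rewrite /root_of; set g := up _.
  have gz : g z = z by rewrite /g /up ffunE.
  have h k : iter k g z = z by elim: k => //= k ->.
  exact: h.
by rewrite !rootE.
Qed.

Definition PL_bot n : PL n := Some (exist _ (edgeless n) (edgeless_priority n)).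

Definition PL_rank n (x : PL n) : nat :=
  match x with
  | None => n.+1
  | Some P => #|edges (val P)|
  end.

Definition char_poly_PL (n : nat) : {poly int} :=
  \sum_(x : PL n) (mobius (@PL_le n) (PL_bot n) x)%:P
                   * 'X^(PL_rank (None : PL n) - PL_rank x).

(** The Möbius function of the priority lattice from the edgeless forest is
    μ(0̂, P) = (-1)^|E(P)| when every edge of P joins two consecutive labels
    i, i+1, and 0 otherwise.  Such "consecutive" forests below P are exactly
    the subsets of the consecutive edges of P, and a nonempty priority forest
    always has one (the smallest vertex with a parent is attached to its
    predecessor, otherwise the priority condition fails), so these values sum
    to 0 over every nontrivial interval [0̂, P].  For n >= 1 the same sum over
    all forests vanishes, so μ(0̂, 1̂) = 0, and the consecutive forests,
    indexed by subsets S of {1, ..., n}, contribute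
    Σ_S (-1)^|S| q^(n+1-|S|) = q (q-1)^n. *)

From mathcomp Require Import all_boot all_order all_algebra.
From mathcomp Require Import zify.
Import GRing.Theory.
Local Open Scope ring_scope.
Set Implicit Arguments. Unset Strict Implicit. Unset Printing Implicit Defensive.

Lemma big_option (T : finType) (R : nmodType) (F : option T -> R) :
  \sum_(x : option T) F x = F None + \sum_(t : T) F (Some t).
Proof.
rewrite (bigD1 None) //=; congr (_ + _).
rewrite (reindex_omap Some id) //=; last by case.
by apply: eq_bigl => t; rewrite eqxx.
Qed.

Lemma sum_subsets_binomial (R : comNzRingType) (I : finType) (A : {set I})
    (x y : R) :
  \sum_(S : {set I} | S \subset A) x ^+ #|S| * y ^+ (#|I| - #|S|) =
  (x + y) ^+ #|A| * y ^+ (#|I| - #|A|).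
Proof.
have <- : \prod_(i : I) ((if i \in A then x else 0) + y) =
          (x + y) ^+ #|A| * y ^+ (#|I| - #|A|).
  rewrite (bigID (mem A)) /=.
  rewrite (eq_bigr (fun=> x + y)) => [|i -> //].
  rewrite [X in _ * X](eq_bigr (fun=> y)) => [|i /negbTE ->]; last by rewrite add0r.
  by rewrite !prodr_const -[#|I|](cardC (mem A)) addKn.
symmetry; rewrite bigA_distr [RHS]big_mkcond; apply: eq_bigr => S _.
have [subSA | /subsetPn[i iS iA]] := boolP (S \subset A); last first.
  by rewrite (bigD1 i) //= iS (negbTE iA) mul0r.
rewrite (bigID (mem S)) /=.
rewrite (eq_bigr (fun=> x)) => [|i iS]; last by rewrite iS (subsetP subSA).
rewrite [X in _ * X](eq_bigr (fun=> y)) => [|i /negbTE -> //].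
by rewrite !prodr_const -[#|I|](cardC (mem S)) addKn.
Qed.

Section MobiusRecursion.
Variables (T : finType) (le : rel T) (rank : T -> nat) (x : T) (g : T -> int).
Hypothesis le_refl : reflexive le.
Hypothesis rank_lt : forall y z, le y z -> y != z -> (rank y < rank z)%N.
Hypothesis g_bot : g x = 1.
Hypothesis g_sum :
  forall y, le x y -> y != x -> \sum_(z | le x z && le z y) g z = 0.

Lemma mobius_fuel_eq k y :
  le x y -> (rank y < k)%N -> mobius_fuel le k x y = g y.
Proof.
elim: k y => [//|k IH] y le_xy rank_y /=.
have [<- //|ne_xy] := eqVneq x y; rewrite le_xy.
have := g_sum le_xy; rewrite eq_sym => /(_ ne_xy) /eqP.
rewrite (bigD1 y) /=; last by rewrite le_xy le_refl.
rewrite addr_eq0 => /eqP ->; congr (- _).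
apply: eq_bigr => z /andP[/andP[le_xz le_zy] ne_zy].
by apply: IH => //; apply: leq_trans (rank_lt le_zy ne_zy) _.
Qed.

Lemma mobius_eq y : le x y -> (rank y < #|T|)%N -> mobius le x y = g y.
Proof. exact: mobius_fuel_eq. Qed.

End MobiusRecursion.

Section Forests.
Variable n : nat.
Implicit Types (f g : forest_fun n) (S : {set 'I_n}).

Lemma edges_subP f g :
  reflect (forall c p, f c = Some p -> g c = Some p) (edges f \subset edges g).
Proof.
apply: (iffP subsetP) => [sub c p fc | sub [p c]].
  by move: (sub (p, c)); rewrite !inE /= fc eqxx => /(_ isT)/eqP.
by rewrite !inE /= => /eqP /sub ->.
Qed.

Lemma edges_inj : injective (@edges n).
Proof.
move=> f g efg; apply/ffunP => c.
case fc: (f c) => [p|].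
  have: (p, c) \in edges g by rewrite -efg inE fc.
  by rewrite inE => /eqP.
case gc: (g c) => [p|] //.
have: (p, c) \in edges f by rewrite efg inE gc.
by rewrite inE fc.
Qed.

Lemma edges_edgeless : edges (edgeless n) = set0.
Proof. by apply/setP => e; rewrite !inE ffunE. Qed.

Lemma card_edges f : #|edges f| = #|[set c | f c != None]|.
Proof.
have <- : snd @: edges f = [set c | f c != None].
  apply/setP => c; rewrite inE.
  apply/imsetP/idP => [[[p c'] + /= ->] | ].
    by rewrite inE /= => /eqP ->.
  by case fc: (f c) => [p|] // _; exists (p, c); rewrite ?inE ?fc.
rewrite card_in_imset // => -[p1 c1] [p2 c2]; rewrite !inE /= => /eqP + /eqP + ec.
by rewrite -ec => -> [->]; rewrite ec.
Qed.

Lemma increasing_parent_lt f c p : increasing f -> f c = Some p -> (p < c)%N.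
Proof. by move=> /forallP /(_ c) + fc; rewrite fc. Qed.

Lemma increasing_ord0 f : increasing f -> f ord0 = None.
Proof.
move=> inc_f; case f0: (f ord0) => [p|] //.
by have := increasing_parent_lt inc_f f0.
Qed.

Lemma card_edges_leq f : increasing f -> (#|edges f| <= n)%N.
Proof.
move=> inc_f; rewrite card_edges.
apply: (@leq_trans #|[set~ (ord0 : 'I_n.+1)]|); last by rewrite cardsC1 card_ord.
apply: subset_leq_card; apply/subsetP => c; rewrite !inE; apply: contra.
by move/eqP->; rewrite increasing_ord0.
Qed.

Lemma iter_up_id f x k : f x = None -> iter k (up f) x = x.
Proof. by move=> fx; elim: k => //= k ->; rewrite /up fx. Qed.

Lemma root_of_root f x : increasing f -> f (root_of f x) = None.
Proof.
move=> inc_f.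
have steps k : f (iter k (up f) x) = None \/ (iter k (up f) x + k <= x)%N.
  elim: k => [|k IH]; first by right; rewrite addn0.
  rewrite iterS {1 3}/up; case fk: (f (iter k (up f) x)) => [p|]; last by left.
  case: IH => [|IH]; first by rewrite fk.
  by right; have := increasing_parent_lt inc_f fk; move: IH; lia.
by case: (steps n.+1) => //; have := ltn_ord x; lia.
Qed.

Definition consecutive f :=
  [forall c, if f c is Some p then (p.+1 == c)%N else true].

Lemma consecutive_root_of f x : consecutive f ->
  (root_of f x <= x)%N /\
  forall z : 'I_n.+1, (root_of f x < z <= x)%N -> f z != None.
Proof.
move=> cons_f.
suff inv k : (iter k (up f) x <= x)%N /\
    forall z : 'I_n.+1, (iter k (up f) x < z <= x)%N -> f z != None by exact: inv.
elim: k => [|k [le_kx parent_k]] /=; first by split => // z; lia.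
rewrite {1 3}/up; case fk: (f (iter k (up f) x)) => [p|]; last by split.
have /eqP p_pred := forallP cons_f (iter k (up f) x); rewrite fk in p_pred.
split=> [|z]; first by move: le_kx; lia.
have [lt_kz | lt_zk | /val_inj <-] := ltngtP (iter k (up f) x) z.
- by move=> ?; apply: parent_k; lia.
- by lia.
- by rewrite fk.
Qed.

Lemma consecutive_priority f : increasing f -> consecutive f -> is_priority f.
Proof.
move=> inc_f cons_f; rewrite /is_priority inc_f.
apply/forallP => x; apply/forallP => y; apply/implyP => lt_root.
rewrite ltnNge; apply/negP => le_yx.
have [_ parent_x] := consecutive_root_of x cons_f.
have [le_root_y _] := consecutive_root_of y cons_f.
have /negP[] : f (root_of f y) != None.
  by apply: parent_x; rewrite lt_root (leq_trans le_root_y le_yx).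
by rewrite root_of_root.
Qed.

Definition consecutive_forest S : forest_fun n :=
  [ffun c => if unlift ord0 c is Some i then
               if i \in S then Some (widen_ord (leqnSn n) i) else None
             else None].

Definition consecutive_edges f : {set 'I_n} :=
  [set i | f (lift ord0 i) == Some (widen_ord (leqnSn n) i)].

Lemma consecutive_forest_lift S i :
  consecutive_forest S (lift ord0 i) =
  if i \in S then Some (widen_ord (leqnSn n) i) else None.
Proof. by rewrite ffunE liftK. Qed.

Lemma consecutive_forest0 S : consecutive_forest S ord0 = None.
Proof. by rewrite ffunE unlift_none. Qed.

Lemma consecutive_forest_increasing S : increasing (consecutive_forest S).
Proof.
apply/forallP => c; case: (unliftP ord0 c) => [i ->|->].
  by rewrite consecutive_forest_lift; case: (i \in S) => //=; rewrite /bump.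
by rewrite consecutive_forest0.
Qed.

Lemma consecutive_forest_consecutive S : consecutive (consecutive_forest S).
Proof.
apply/forallP => c; case: (unliftP ord0 c) => [i ->|->].
  by rewrite consecutive_forest_lift; case: (i \in S) => //=; rewrite /bump.
by rewrite consecutive_forest0.
Qed.

Lemma consecutive_forest_priority S : is_priority (consecutive_forest S).
Proof.
exact: consecutive_priority (consecutive_forest_increasing S)
                            (consecutive_forest_consecutive S).
Qed.

Definition consecutive_pforest S : pforest n :=
  exist _ (consecutive_forest S) (consecutive_forest_priority S).

Lemma consecutive_forestK : cancel consecutive_forest consecutive_edges.
Proof.
move=> S; apply/setP => i.
rewrite /consecutive_edges inE consecutive_forest_lift.
by case: (i \in S); rewrite ?eqxx.
Qed.

Lemma consecutive_edgesK f :
  increasing f -> consecutive f -> consecutive_forest (consecutive_edges f) = f.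
Proof.
move=> inc_f cons_f; apply/ffunP => c.
case: (unliftP ord0 c) => [i ->|->]; last first.
  by rewrite consecutive_forest0 increasing_ord0.
rewrite consecutive_forest_lift /consecutive_edges inE.
case fi: (f (lift ord0 i)) => [p|] //=.
have := forallP cons_f (lift ord0 i); rewrite fi /= /bump /= => /eqP[p_pred].
by rewrite (_ : p = widen_ord _ i) ?eqxx //; apply: val_inj.
Qed.

Lemma card_edges_consecutive_forest S : #|edges (consecutive_forest S)| = #|S|.
Proof.
rewrite card_edges.
suff -> : [set c | consecutive_forest S c != None] = lift ord0 @: S.
  by apply: card_imset; exact: lift_inj.
apply/setP => c; rewrite inE; case: (unliftP ord0 c) => [i ->|->].
  by rewrite consecutive_forest_lift mem_imset; [case: (i \in S) | exact: lift_inj].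
rewrite consecutive_forest0 /=; apply/esym/imsetP => -[i _] /eqP.
by rewrite (negbTE (neq_lift _ _)).
Qed.

Lemma consecutive_forest_subset S f :
  (edges (consecutive_forest S) \subset edges f) = (S \subset consecutive_edges f).
Proof.
apply/edges_subP/subsetP => [sub i iS | sub c p].
  by rewrite inE (sub _ (widen_ord (leqnSn n) i)) // consecutive_forest_lift iS.
case: (unliftP ord0 c) => [i ->|->]; last by rewrite consecutive_forest0.
rewrite consecutive_forest_lift; case: ifP => // /sub.
by rewrite inE => /eqP -> [->].
Qed.

Lemma card_pforest_gt : (n < #|{: pforest n}|)%N.
Proof.
apply: leq_trans (ltn_expl n (isT : (1 < 2)%N)) _.
have -> : (2 ^ n)%N = #|powerset [set: 'I_n]|.
  by rewrite card_powerset cardsT card_ord.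
apply: leq_trans (max_card _) (leq_card consecutive_pforest _).
move=> S1 S2 /(congr1 val) /= eqS.
by rewrite -(consecutive_forestK S1) eqS consecutive_forestK.
Qed.

Lemma priority_consecutive_edges_neq0 f :
  is_priority f -> f != edgeless n -> consecutive_edges f != set0.
Proof.
case/andP=> inc_f prio_f ne_f.
have [c0 c0_child] : exists c, f c != None.
  apply/existsP; apply: contraR ne_f => /existsPn no_parent; apply/eqP/ffunP => c.
  by rewrite ffunE; move: (no_parent c); case: (f c).
case: (@arg_minnP _ c0 (fun c => f c != None) val c0_child) => c c_child c_min.
case fc: (f c) c_child => [p|] // _.
have lt_pc := increasing_parent_lt inc_f fc.
have no_parent (d : 'I_n.+1) : (d < c)%N -> f d = None.
  case fd: (f d) => [q|] // lt_dc; have := c_min d; rewrite fd => /(_ isT).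
  by move/(leq_trans lt_dc); rewrite ltnn.
have p_pred : p.+1 = c.
  apply/eqP; rewrite eqn_leq lt_pc leqNgt; apply/negP => lt_p1c.
  pose d : 'I_n.+1 := Ordinal (ltn_trans lt_p1c (ltn_ord c)).
  have root_c : root_of f c = p.
    by rewrite /root_of iterSr {2}/up fc iter_up_id // no_parent.
  have := implyP (forallP (forallP prio_f c) d).
  rewrite root_c /root_of iter_up_id ?no_parent //= ltnSn => /(_ isT); lia.
case: (unliftP ord0 c) fc p_pred => [i ->|->] // fi p_pred.
apply/set0Pn; exists i; rewrite inE fi; apply/eqP; congr Some; apply: val_inj.
by move: p_pred; rewrite /= /bump /=; lia.
Qed.

End Forests.

Lemma sum_subsets_sign (R : comNzRingType) (I : finType) (A : {set I}) :
  A != set0 -> \sum_(S : {set I} | S \subset A) (-1) ^+ #|S| = 0 :> R.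
Proof.
move=> /set0Pn[i iA].
transitivity (\sum_(S : {set I} | S \subset A)
                (-1) ^+ #|S| * 1 ^+ (#|I| - #|S|) : R).
  by apply: eq_bigr => S _; rewrite expr1n mulr1.
by rewrite sum_subsets_binomial addNr expr0n (cardD1 i) iA mul0r.
Qed.

Definition pforest_mobius n (P : pforest n) : int :=
  if consecutive (val P) then (-1) ^+ #|edges (val P)| else 0.

Lemma sum_consecutive_pforest n (R : nmodType) (C : pred (pforest n))
    (F : nat -> R) :
  \sum_(P | C P) (if consecutive (val P) then F #|edges (val P)| else 0) =
  \sum_(S : {set 'I_n} | C (consecutive_pforest S)) F #|S|.
Proof.
rewrite -big_mkcondr (reindex_onto (@consecutive_pforest n)
                        (fun P => consecutive_edges (val P))) /=.
  apply: eq_big => [S | S _]; last by rewrite card_edges_consecutive_forest.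
  by rewrite consecutive_forestK eqxx consecutive_forest_consecutive !andbT.
move=> P /andP[_ cons_P]; apply: val_inj => /=.
by apply: consecutive_edgesK cons_P; case/andP: (valP P).
Qed.

Lemma sum_pforest_mobius_below n (P : pforest n) : val P != edgeless n ->
  \sum_(Q | edges (val Q) \subset edges (val P)) pforest_mobius Q = 0.
Proof.
move=> ne_P; rewrite (sum_consecutive_pforest _ (fun k => (-1) ^+ k)) /=.
under eq_bigl => S do rewrite consecutive_forest_subset.
by apply: sum_subsets_sign; apply: priority_consecutive_edges_neq0 (valP P) _.
Qed.

Lemma sum_pforest_mobius n :
  (1 <= n)%N -> \sum_(P : pforest n) pforest_mobius P = 0.
Proof.
move=> n_gt0; rewrite (sum_consecutive_pforest xpredT (fun k => (-1) ^+ k)) /=.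
under eq_bigl => S do rewrite -(subsetT S).
by apply: sum_subsets_sign; apply/set0Pn; exists (Ordinal n_gt0).
Qed.

Section PriorityLattice.
Variable n : nat.
Hypothesis n_gt0 : (1 <= n)%N.

Definition PL_mobius (x : PL n) : int :=
  if x is Some P then pforest_mobius P else 0.

Lemma PL_le_refl : reflexive (@PL_le n).
Proof. by case => //= P; apply: subxx. Qed.

Lemma PL_bot_le (x : PL n) : PL_le (PL_bot n) x.
Proof. by case: x => //= P; rewrite edges_edgeless sub0set. Qed.

Lemma PL_rank_lt (x y : PL n) : PL_le x y -> x != y -> (PL_rank x < PL_rank y)%N.
Proof.
case: x y => [P|] [Q|] //= sub_PQ ne_PQ; last first.
  by rewrite ltnS card_edges_leq //; case/andP: (valP P).
rewrite proper_card // properEneq sub_PQ andbT; apply: contraNneq ne_PQ.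
by move=> /edges_inj /val_inj ->.
Qed.

Lemma PL_mobius_sum (y : PL n) : PL_le (PL_bot n) y -> y != PL_bot n ->
  \sum_(z | PL_le (PL_bot n) z && PL_le z y) PL_mobius z = 0.
Proof.
under eq_bigl => z do rewrite PL_bot_le.
case: y => [P|] _ ne_bot; rewrite big_mkcond big_option /= add0r; last first.
  exact: sum_pforest_mobius.
rewrite -big_mkcond; apply: sum_pforest_mobius_below.
apply: contraNneq ne_bot => P_bot.
by apply/eqP; congr Some; apply: val_inj.
Qed.

Lemma mobius_PL (x : PL n) : mobius (@PL_le n) (PL_bot n) x = PL_mobius x.
Proof.
apply: (mobius_eq PL_le_refl PL_rank_lt _ PL_mobius_sum).
- rewrite /= /pforest_mobius /= edges_edgeless cards0 (_ : consecutive _) //.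
  by apply/forallP => c; rewrite ffunE.
- exact: PL_bot_le.
- rewrite card_option ltnS; case: x => [P|] /=; last exact: card_pforest_gt.
  apply: leq_trans (ltnW (card_pforest_gt n)).
  by apply: card_edges_leq; case/andP: (valP P).
Qed.

End PriorityLattice.

Theorem corollary5p16 (n : nat) :
  (1 <= n)%N -> char_poly_PL n = 'X * ('X - 1) ^+ n.
Proof.
move=> n_gt0; rewrite /char_poly_PL big_option mobius_PL //= polyC0 mul0r add0r.
under eq_bigr => P _ do rewrite mobius_PL //.
pose F k : {poly int} := ((-1) ^+ k)%:P * 'X^(n.+1 - k).
transitivity (\sum_(P : pforest n)
                if consecutive (val P) then F #|edges (val P)| else 0).
  apply: eq_bigr => P _; rewrite /= /pforest_mobius.
  by case: ifP; rewrite ?polyC0 ?mul0r.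
rewrite (sum_consecutive_pforest xpredT F) /=.
have -> : ('X - 1 : {poly int}) ^+ n =
          (-1 + 'X) ^+ #|[set: 'I_n]| * 'X ^+ (#|'I_n| - #|[set: 'I_n]|).
  by rewrite cardsT card_ord subnn expr0 mulr1 addrC.
rewrite -sum_subsets_binomial mulr_sumr; apply: eq_big => [S | S _].
  by rewrite subsetT.
have le_Sn : (#|S| <= n)%N by have := max_card (mem S); rewrite card_ord.
by rewrite /F card_ord subSn // exprS rmorphXn /= polyCN polyC1 mulrCA.
Qed.
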